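(* Let $G$ be a finite simple graph on $[d]$, $k\ge1$, and let $f,g$ be $k$-colorings of an induced subgraph $G_0$ of $G$. Then $f\sim_k g$ if and only if ${\bf x}_f-{\bf x}_g\in K_G$.
   Context: A $k$-coloring of a graph $H$ is a map $f:V(H)\to[k]$ (not necessarily surjective) with $f(u)\neq f(v)$ for every edge. A Kempe switching: for colors $i<j$ and a connected component $C$ of $H[f^{-1}(i)\cup f^{-1}(j)]$, interchange $i$ and $j$ on $C$. $f\sim_k g$ if $g$ is obtained from $f$ by a finite sequence of Kempe switchings. A stable set of $G$ is a subset of $[d]$ with no edge of $G$ (including $\emptyset$ and singletons); $S(G)$ is the set of stable sets; $R[G]=\mathbb{K}[x_S : S\in S(G)]$ over a field $\mathbb{K}$. For a $k$-coloring $f$ of an induced subgraph, ${\bf x}_f=\prod_{\ell=1}^k x_{f^{-1}(\ell)}$. $J_G$ is the ideal generated by all ${\bf x}_f-{\bf x}_g$ with $f,g$ $2$-colorings of a common induced subgraph of $G$; $M_G=\langle x_Sx_T : S,T\in S(G),\ S\cap T\neq\emptyset\rangle$; $K_G=J_G+M_G$. *)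

From HB Require Import structures.
From mathcomp Require Import all_boot all_algebra.
From mathcomp Require Import mpoly.
From Stdlib Require Import Relations.

Set Implicit Arguments.
Unset Strict Implicit.
Unset Printing Implicit Defensive.

Import GRing.Theory.
Local Open Scope ring_scope.

(* A finite simple graph on [d] = 'I_d is a symmetric irreflexive G : rel 'I_d
   (these two properties are hypotheses of the theorem). *)

Definition stableb (d : nat) (G : rel 'I_d) (S : {set 'I_d}) : bool :=
  [forall u in S, forall v in S, ~~ G u v].

Definition stab (d : nat) (G : rel 'I_d) := {S : {set 'I_d} | stableb G S}.

Definition nvars (d : nat) (G : rel 'I_d) : nat := #|{: stab G}|.

(* The variable x_S of R[G] = {mpoly K[nvars G]}, the variables being labelled
   by the stable sets via the bijection enum_rank.  (Junk value 0 if S is not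
   stable; only used on stable sets.) *)
Definition xS (K : fieldType) (d : nat) (G : rel 'I_d) (S : {set 'I_d})
  : {mpoly K[nvars G]} :=
  match (insub S : option (stab G)) with
  | Some s => 'X_(enum_rank s)
  | None => 0
  end.

(* A partial map f : 'I_d -> option 'I_k is a k-coloring of the induced
   subgraph G[V0] when its domain is exactly V0 and it is proper on G[V0]. *)
Definition coloring (d k : nat) (G : rel 'I_d) (V0 : {set 'I_d})
  (f : {ffun 'I_d -> option 'I_k}) : bool :=
  [forall v, (f v != None) == (v \in V0)] &&
  [forall u, forall v, [&& G u v, u \in V0 & v \in V0] ==> (f u != f v)].

Definition colclass (d k : nat) (f : {ffun 'I_d -> option 'I_k}) (l : 'I_k)
  : {set 'I_d} := [set v | f v == Some l].

Definition xf (K : fieldType) (d k : nat) (G : rel 'I_d)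
  (f : {ffun 'I_d -> option 'I_k}) : {mpoly K[nvars G]} :=
  \prod_(l < k) xS K G (colclass f l).

Definition ideal_gen (n : nat) (K : fieldType) (P : {mpoly K[n]} -> Prop)
  (p : {mpoly K[n]}) : Prop :=
  exists s : seq ({mpoly K[n]} * {mpoly K[n]}),
    (forall q, q \in s -> P q.2) /\ p = \sum_(q <- s) q.1 * q.2.

Definition JG_gen (K : fieldType) (d : nat) (G : rel 'I_d)
  (p : {mpoly K[nvars G]}) : Prop :=
  exists (V0 : {set 'I_d}) (f g : {ffun 'I_d -> option 'I_2}),
    coloring G V0 f /\ coloring G V0 g /\ p = xf K G f - xf K G g.

Definition MG_gen (K : fieldType) (d : nat) (G : rel 'I_d)
  (p : {mpoly K[nvars G]}) : Prop :=
  exists S T : {set 'I_d},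
    stableb G S /\ stableb G T /\ S :&: T != set0 /\ p = xS K G S * xS K G T.

Definition JG K d G := ideal_gen (@JG_gen K d G).
Definition MG K d G := ideal_gen (@MG_gen K d G).

Definition KG (K : fieldType) (d : nat) (G : rel 'I_d) (p : {mpoly K[nvars G]})
  : Prop :=
  exists a b, @JG K d G a /\ @MG K d G b /\ p = a + b.

Definition swapc (k : nat) (i j : 'I_k) (o : option 'I_k) : option 'I_k :=
  match o with
  | Some c => Some (if c == i then j else if c == j then i else c)
  | None => None
  end.

Definition kempe_step (d k : nat) (G : rel 'I_d)
  (f g : {ffun 'I_d -> option 'I_k}) : Prop :=
  exists (i j : 'I_k) (x : 'I_d),
    (i < j)%N /\
    let W := [set v | (f v == Some i) || (f v == Some j)] in
    x \in W /\
    let C := [set y | connect [rel u v | [&& u \in W, v \in W & G u v]] x y] in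
    forall v, g v = if v \in C then swapc i j (f v) else f v.

Definition kempe_equiv (d k : nat) (G : rel 'I_d) :=
  clos_refl_trans _ (@kempe_step d k G).

Arguments xS K {d} G S.
Arguments xf K {d k} G f.
Arguments KG K {d} G p.
Arguments JG K {d} G p.
Arguments MG K {d} G p.

(* A Kempe switching on colours i, j only changes the classes i and j, which
   form a 2-colouring of the subgraph induced on f^-1(i) ∪ f^-1(j); so x_f - x_g
   is a monomial multiple of a generator of J_G.  Conversely, let E be the set of
   monomials x_h of the colourings h ~_k f, and phi the linear form summing the
   coefficients of the monomials in E.  Multiplying a generator x_F - x_F' of J_G
   by a monomial preserves membership in E, because the two classes of F then
   occur in h and recolouring them as in F' is a sequence of Kempe switchings
   (switch the chains on which the two colourings disagree); and no monomial of E
   is divisible by x_S x_T with S ∩ T nonempty, colour classes being disjoint.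
   Hence phi vanishes on K_G, so phi(x_f - x_g) = 0 forces x_g ∈ E.  Finally two
   colourings with the same monomial differ by a permutation of the colours, a
   product of transpositions, each of which is again a recolouring of two classes. *)

From mathcomp Require Import all_boot all_algebra perm.
From mathcomp Require Import mpoly.
From Stdlib Require Import Relations ClassicalEpsilon.

Set Implicit Arguments.
Unset Strict Implicit.
Unset Printing Implicit Defensive.

Import GRing.Theory.

Lemma colclass_inj (d k : nat) (h h' : {ffun 'I_d -> option 'I_k}) :
  (forall l, colclass h l = colclass h' l) -> h = h'.
Proof.
move=> eq_cl; apply/ffunP => v.
have inclass (h1 h2 : {ffun 'I_d -> option 'I_k}) l :
    h1 v = Some l -> colclass h1 l = colclass h2 l -> h2 v = Some l.
  by move=> h1v /setP/(_ v); rewrite !inE h1v eqxx => /esym/eqP.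
case hv: (h v) => [l|]; first by rewrite (inclass _ _ _ hv (eq_cl l)).
case h'v: (h' v) => [l|] //.
by rewrite (inclass _ _ _ h'v (esym (eq_cl l))) in hv.
Qed.

Lemma colclass_disjoint (d k : nat) (h : {ffun 'I_d -> option 'I_k}) (l l' : 'I_k) :
  l != l' -> colclass h l = colclass h l' -> colclass h l = set0.
Proof.
move=> neq eq_cl; apply/setP => v; rewrite !inE; apply/negbTE/eqP => hv.
have : v \in colclass h l' by rewrite -eq_cl inE hv.
by rewrite inE hv (inj_eq (@Some_inj _)) (negbTE neq).
Qed.

Section Swapc.
Variable k : nat.
Implicit Types (i j : 'I_k) (o : option 'I_k).

Lemma swapcE i j o : swapc i j o = omap (tperm i j) o.
Proof.
case: o => //= c; congr Some.
by case: tpermP => [->|->|/eqP/negbTE -> /eqP/negbTE ->]; rewrite ?eqxx //; case: eqP => // ->.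
Qed.

Lemma swapcC i j : swapc i j =1 swapc j i.
Proof. by move=> o; rewrite !swapcE tpermC. Qed.

Lemma swapc_inj i j : injective (swapc i j).
Proof. by move=> [a|] [b|]; rewrite !swapcE //= => /Some_inj/perm_inj ->. Qed.

Lemma swapc_eqNone i j o : (swapc i j o == None) = (o == None).
Proof. by case: o. Qed.

Lemma swapc_pair i j o :
  (swapc i j o == Some i) || (swapc i j o == Some j) = (o == Some i) || (o == Some j).
Proof.
rewrite swapcE; case: o => //= c; rewrite !(inj_eq (@Some_inj _)).
by case: tpermP => [->|->|/eqP/negbTE -> /eqP/negbTE ->]; rewrite ?eqxx ?orbT.
Qed.

Lemma swapc_id i j o : ~~ ((o == Some i) || (o == Some j)) -> swapc i j o = o.
Proof.
rewrite swapcE; case: o => //= c; rewrite !(inj_eq (@Some_inj _)) negb_or.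
by case/andP => ci cj; rewrite tpermD // eq_sym.
Qed.

Lemma swapc_other i j o o' : i != j ->
  (o == Some i) || (o == Some j) -> (o' == Some i) || (o' == Some j) ->
  o != o' -> o' = swapc i j o.
Proof.
move=> neq; rewrite swapcE.
by do 2!case/orP=> /eqP ->; rewrite ?eqxx //= ?tpermL ?tpermR.
Qed.

End Swapc.

Section KempeSwitching.
Variables (d k : nat) (G : rel 'I_d).
Hypothesis Gsym : ssrbool.symmetric G.
Local Notation coloringT := {ffun 'I_d -> option 'I_k}.
Implicit Types (h : coloringT) (i j : 'I_k) (W : {set 'I_d}).

Definition bicolored h i j : {set 'I_d} := [set v | (h v == Some i) || (h v == Some j)].

Definition induced_rel W : rel 'I_d := [rel u v | [&& u \in W, v \in W & G u v]].

Definition kempe_chain h i j x : {set 'I_d} :=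
  [set y | connect (induced_rel (bicolored h i j)) x y].

Definition kempe_switch h i j x : coloringT :=
  [ffun v => if v \in kempe_chain h i j x then swapc i j (h v) else h v].

Lemma bicoloredC h i j : bicolored h i j = bicolored h j i.
Proof. by apply/setP => v; rewrite !inE orbC. Qed.

Lemma kempe_switchC h i j x : kempe_switch h i j x = kempe_switch h j i x.
Proof. by apply/ffunP => v; rewrite !ffunE /kempe_chain bicoloredC swapcC. Qed.

Lemma kempe_stepP h h' :
  kempe_step G h h' <->
  exists i j x, [/\ (i < j)%N, x \in bicolored h i j & h' = kempe_switch h i j x].
Proof.
split=> [[i [j [x [ij [xW eq_h']]]]]|[i [j [x [ij xW ->]]]]]; exists i, j, x.
  by split=> //; apply/ffunP => v; rewrite eq_h' /kempe_switch ffunE.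
by do 2!split=> //; move=> C v; rewrite /kempe_switch ffunE.
Qed.

Lemma kempe_switch_step h i j x :
  i != j -> x \in bicolored h i j -> kempe_step G h (kempe_switch h i j x).
Proof.
case: (ltngtP i j) => [ij|ji|/val_inj->]; last by rewrite eqxx.
  by move=> _ xW; apply/kempe_stepP; exists i, j, x.
by rewrite bicoloredC kempe_switchC => _ xW; apply/kempe_stepP; exists j, i, x.
Qed.

Lemma coloringP (V0 : {set 'I_d}) h :
  coloring G V0 h <->
  (forall v, (h v != None) = (v \in V0)) /\ (forall u v, G u v -> h u != None -> h u != h v).
Proof.
split=> [/andP[/forallP dom /forallP proper]|[dom proper]].
  split=> [v|u v Guv]; first exact: eqP (dom v).
  rewrite (eqP (dom u)) => uV0; case vV0: (v \in V0).
    by move/forallP: (proper u) => /(_ v); rewrite Guv uV0 vV0.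
  by apply: (contraFneq _ vV0) => eq_uv; rewrite -(eqP (dom v)) -eq_uv (eqP (dom u)).
apply/andP; split; apply/forallP => u; first by rewrite dom.
apply/forallP => v; apply/implyP => /and3P[Guv uV0 _]; apply: proper => //; by rewrite dom.
Qed.

Lemma connect_induced_in W x y : x \in W -> connect (induced_rel W) x y -> y \in W.
Proof. by move=> xW xy; rewrite -(closed_connect _ xy) // => u v /and3P[-> ->]. Qed.

Lemma kempe_chain_bicolored h i j x y :
  x \in bicolored h i j -> y \in kempe_chain h i j x -> y \in bicolored h i j.
Proof. by move=> xW; rewrite inE; apply: connect_induced_in. Qed.

Lemma bicolored_kempe_switch h i j x : bicolored (kempe_switch h i j x) i j = bicolored h i j.
Proof. by apply/setP => v; rewrite !inE ffunE; case: ifP; rewrite ?swapc_pair. Qed.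

Lemma colclass_kempe_switch h i j x l : x \in bicolored h i j -> l != i -> l != j ->
  colclass (kempe_switch h i j x) l = colclass h l.
Proof.
move=> xW li lj; apply/setP => v; rewrite !inE ffunE; case: ifP => // /(kempe_chain_bicolored xW).
rewrite inE => /orP[]/eqP->; rewrite swapcE /= ?tpermL ?tpermR !(inj_eq (@Some_inj _)).
  by rewrite eq_sym (negbTE lj) eq_sym (negbTE li).
by rewrite eq_sym (negbTE li) eq_sym (negbTE lj).
Qed.

(* An edge leaving a Kempe chain ends outside the two colours of the switch. *)
Lemma kempe_switch_coloring (V0 : {set 'I_d}) h i j x :
  x \in bicolored h i j -> coloring G V0 h -> coloring G V0 (kempe_switch h i j x).
Proof.
move=> xW /coloringP[dom proper]; apply/coloringP; split=> [v|u v Guv].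
  by rewrite ffunE; case: ifP; rewrite ?swapc_eqNone dom.
have leave u' v' : G u' v' -> u' \in kempe_chain h i j x -> v' \notin kempe_chain h i j x ->
    v' \notin bicolored h i j.
  move=> Gu'v' u'C; apply: contra => v'W; have u'W := kempe_chain_bicolored xW u'C.
  by move: u'C; rewrite !inE => xu'; rewrite (connect_trans xu') // connect1 //; apply/and3P.
rewrite !ffunE; case: ifP => uC; case: ifP => vC.
- by rewrite swapc_eqNone (inj_eq (@swapc_inj _ _ _)); apply: proper.
- move=> _; apply: (contraNneq _ (leave u v Guv uC (negbT vC))) => eq_uv.
  by move: (kempe_chain_bicolored xW uC); rewrite !inE -eq_uv swapc_pair.
- move=> _; have Gvu : G v u by rewrite Gsym.
  apply: (contraNneq _ (leave v u Gvu vC (negbT uC))) => eq_uv.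
  by move: (kempe_chain_bicolored xW vC); rewrite !inE eq_uv swapc_pair.
- exact: proper.
Qed.

Lemma kempe_step_coloring (V0 : {set 'I_d}) h h' :
  coloring G V0 h -> kempe_step G h h' -> coloring G V0 h'.
Proof. by move=> col_h /kempe_stepP[i [j [x [_ xW ->]]]]; apply: kempe_switch_coloring. Qed.

Lemma kempe_equiv_coloring (V0 : {set 'I_d}) h h' :
  coloring G V0 h -> kempe_equiv G h h' -> coloring G V0 h'.
Proof.
move=> + hh'; elim: hh' => [h1 h2 step col|//|h1 h2 h3 _ IH12 _ IH23 /IH12/IH23] //.
exact: kempe_step_coloring col step.
Qed.

(* Along an edge of the chain both colourings use the two colours i, j, and
   differently at the two ends, so each value is swapped: disagreement propagates. *)
Lemma kempe_chain_disagree (V0 : {set 'I_d}) h h' i j x y :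
  coloring G V0 h -> coloring G V0 h' -> i != j -> {subset bicolored h i j <= bicolored h' i j} ->
  h x != h' x -> y \in kempe_chain h i j x -> h y != h' y.
Proof.
move=> /coloringP[_ proper] /coloringP[_ proper'] neq on hx.
have disagree_closed : closed (induced_rel (bicolored h i j)) [pred v | h v != h' v].
  move=> u v /and3P[uW vW Guv]; have [u'W v'W] := (on u uW, on v vW).
  rewrite !inE in uW vW u'W v'W *.
  have hu : h u != None by case: (h u) uW.
  have h'u : h' u != None by case: (h' u) u'W.
  rewrite (swapc_other neq uW vW (proper u v Guv hu)).
  by rewrite (swapc_other neq u'W v'W (proper' u v Guv h'u)) (inj_eq (@swapc_inj _ _ _)).
by rewrite inE => /(closed_connect disagree_closed); rewrite !inE => <-.
Qed.

Lemma kempe_equiv_bicolored (V0 : {set 'I_d}) h h' i j :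
  coloring G V0 h -> coloring G V0 h' -> i != j ->
  (forall v, v \notin bicolored h i j -> h' v = h v) ->
  {subset bicolored h i j <= bicolored h' i j} ->
  kempe_equiv G h h'.
Proof.
move=> + col_h' neq; have [n] := ubnP #|[set v | h v != h' v]|; elim: n h => // n IH h.
move=> lt_n col_h off on.
have [agree|[x]] := set_0Vmem [set v | h v != h' v].
  suff -> : h = h' by apply: rt_refl.
  by apply/ffunP => v; apply/eqP/negPn; move/setP: agree => /(_ v); rewrite !inE => ->.
rewrite inE => hx; have xW : x \in bicolored h i j by apply: contraR hx => /off ->.
set h1 := kempe_switch h i j x.
have h1_chain y : y \in kempe_chain h i j x -> h1 y = h' y.
  move=> yC; have yW := kempe_chain_bicolored xW yC; have y'W := on y yW.
  move: yW y'W; rewrite !inE /h1 ffunE yC => yW y'W.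
  exact/esym/(swapc_other neq yW y'W)/(kempe_chain_disagree col_h col_h' neq on hx yC).
have h1_off y : y \notin kempe_chain h i j x -> h1 y = h y.
  by move=> yC; rewrite /h1 ffunE (negbTE yC).
have W1 : bicolored h1 i j = bicolored h i j by apply: bicolored_kempe_switch.
apply: rt_trans (rt_step _ _ _ _ (kempe_switch_step neq xW)) _.
apply: IH; rewrite ?W1 //.
- rewrite ltnS in lt_n; apply: leq_trans (proper_card _) lt_n; apply/properP; split.
    apply/subsetP => v; rewrite !inE; case: (boolP (v \in kempe_chain h i j x)) => vC.
      by rewrite h1_chain ?eqxx.
    by rewrite h1_off.
  have xC : x \in kempe_chain h i j x by rewrite inE connect0.
  by exists x; rewrite !inE ?h1_chain ?eqxx.
- exact: kempe_switch_coloring.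
- move=> v vW; rewrite off // h1_off //; apply: contra vW; exact: kempe_chain_bicolored.
Qed.

Definition swap_colors i j h : coloringT := [ffun v => swapc i j (h v)].

Lemma colclass_swap_colors i j h l : colclass (swap_colors i j h) l = colclass h (tperm i j l).
Proof.
apply/setP => v; rewrite !inE ffunE swapcE; case: (h v) => //= c.
by rewrite !(inj_eq (@Some_inj _)) -{1}(tpermK i j l) (inj_eq (@perm_inj _ _)).
Qed.

Lemma kempe_equiv_swap_colors (V0 : {set 'I_d}) h i j :
  coloring G V0 h -> i != j -> kempe_equiv G h (swap_colors i j h).
Proof.
move=> col_h neq; have /coloringP[dom proper] := col_h.
apply: (kempe_equiv_bicolored col_h _ neq).
- apply/coloringP; split=> [v|u v Guv]; rewrite !ffunE ?swapc_eqNone //.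
  by rewrite (inj_eq (@swapc_inj _ _ _)); apply: proper.
- by move=> v; rewrite inE ffunE => /swapc_id.
- by move=> v; rewrite !inE ffunE swapc_pair.
Qed.

End KempeSwitching.

Section Monomials.
Variables (d : nat) (G : rel 'I_d).
Local Notation n := (nvars G).

Definition mxS (S : {set 'I_d}) : 'X_{1..n} :=
  if insub S is Some s then U_(enum_rank s)%MM else 0%MM.

Definition mxf k (h : {ffun 'I_d -> option 'I_k}) : 'X_{1..n} :=
  (\sum_(l < k) mxS (colclass h l))%MM.

Lemma xS_mxS (K : fieldType) S : stableb G S -> xS K G S = 'X_[mxS S].
Proof. by move=> stS; rewrite /xS /mxS insubT. Qed.

Lemma mxS_rank S (s : stab G) : stableb G S -> mxS S (enum_rank s) = (S == val s).
Proof. by move=> stS; rewrite /mxS insubT mnm1E (inj_eq enum_rank_inj) -(inj_eq val_inj). Qed.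

Lemma colclass_stable k (V0 : {set 'I_d}) (h : {ffun 'I_d -> option 'I_k}) l :
  coloring G V0 h -> stableb G (colclass h l).
Proof.
move=> /coloringP[_ proper]; apply/forall_inP => u; rewrite inE => /eqP hu.
apply/forall_inP => v; rewrite inE => /eqP hv; apply/negP => /proper.
by rewrite hu hv eqxx => /(_ isT).
Qed.

Lemma xf_mxf (K : fieldType) k (V0 : {set 'I_d}) (h : {ffun 'I_d -> option 'I_k}) :
  coloring G V0 h -> xf K G h = 'X_[mxf h].
Proof.
move=> col_h; apply: (big_ind2 (fun p m => p = 'X_[m])) => [|p1 m1 p2 m2 -> ->|l _].
- by rewrite mpolyX0.
- by rewrite mpolyXD.
- exact/xS_mxS/colclass_stable/col_h.
Qed.

Lemma sum_mxS_has_class k (h : {ffun 'I_d -> option 'I_k}) (P : pred 'I_k) mu S :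
  (forall l, stableb G (colclass h l)) -> stableb G S ->
  (\sum_(l | P l) mxS (colclass h l))%MM = (mu + mxS S)%MM ->
  exists2 l, P l & colclass h l = S.
Proof.
move=> st_h stS; pose s : stab G := Sub S stS.
move=> /(congr1 (fun m : 'X_{1..n} => m (enum_rank s))).
rewrite mnm_sumE mnmDE mxS_rank //= eqxx addn1.
have [/existsP[l /andP[Pl /eqP h_l]]|] := boolP [exists l, P l && (colclass h l == S)].
  by exists l.
rewrite negb_exists => /forallP none; rewrite big1 // => l Pl.
by rewrite mxS_rank //=; move: (none l); rewrite Pl /= => /negbTE ->.
Qed.

Lemma mxf_two_classes k (V0 : {set 'I_d}) (h : {ffun 'I_d -> option 'I_k}) mu S T :
  coloring G V0 h -> stableb G S -> stableb G T -> mxf h = (mu + mxS S + mxS T)%MM ->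
  exists l1 l2, [/\ l1 != l2, colclass h l1 = S & colclass h l2 = T].
Proof.
move=> col_h stS stT eq_h; have st_h l := colclass_stable l col_h.
have [l1 _ h_l1] : exists2 l, predT l & colclass h l = S.
  apply: (@sum_mxS_has_class _ h predT (mu + mxS T)%MM S st_h stS).
  by transitivity (mxf h) => //; rewrite eq_h -addmA (addmC (mxS S)) addmA.
move: eq_h; rewrite /mxf (bigD1 l1) //= h_l1 (addmC mu) -addmA => /addmI eq_rest.
have [l2 l2l1 h_l2] := sum_mxS_has_class st_h stT eq_rest.
by exists l1, l2; rewrite eq_sym.
Qed.

End Monomials.

Section ColorPermutation.
Variables (d k : nat) (G : rel 'I_d).
Hypothesis Gsym : ssrbool.symmetric G.
Local Notation coloringT := {ffun 'I_d -> option 'I_k}.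
Implicit Types (h g : coloringT).

Lemma mxf_swap_colors i j h : mxf G (swap_colors i j h) = mxf G h.
Proof.
rewrite /mxf (reindex_inj (@perm_inj _ (tperm i j))) /=.
by apply: eq_bigr => l _; rewrite colclass_swap_colors tpermK.
Qed.

Lemma mxf_has_class (V0 V1 : {set 'I_d}) h g l :
  coloring G V0 h -> coloring G V1 g -> mxf G h = mxf G g ->
  exists l', colclass h l' = colclass g l.
Proof.
move=> col_h col_g eq_mxf.
have [l' _ h_l'] : exists2 l', predT l' & colclass h l' = colclass g l.
  apply: (@sum_mxS_has_class _ _ _ h predT (\sum_(i | i != l) mxS G (colclass g i))%MM).
  - by move=> l'; apply: colclass_stable col_h.
  - exact: colclass_stable col_g.
  by transitivity (mxf G h) => //; rewrite eq_mxf /mxf (bigD1 l) //= addmC.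
by exists l'.
Qed.

Definition mismatched h g : {set 'I_k} := [set l | colclass h l != colclass g l].

Lemma mismatched_swap_colors h g i j :
  i != j -> colclass h j = colclass g i -> j \in mismatched h g -> i \in mismatched h g ->
  mismatched (swap_colors i j h) g \proper mismatched h g.
Proof.
move=> neq h_j j_bad i_bad; apply/properP; split.
  apply/subsetP => l; rewrite !inE colclass_swap_colors.
  case: tpermP => [->|->|_ _] //; first by rewrite h_j eqxx.
  by move: j_bad; rewrite inE.
by exists i => //; rewrite !inE colclass_swap_colors tpermL h_j eqxx.
Qed.

(* If the class l of g is nonempty, some class of h equals it; otherwise the
   class l of h is nonempty and equals some class of g.  Distinct nonempty
   classes being disjoint, both colours of the pair are mismatched. *)
Lemma mismatched_swap_pair (V0 : {set 'I_d}) h g l :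
  coloring G V0 h -> coloring G V0 g -> mxf G h = mxf G g -> l \in mismatched h g ->
  exists i j, [/\ i != j, colclass h j = colclass g i,
                  i \in mismatched h g & j \in mismatched h g].
Proof.
move=> col_h col_g eq_mxf; rewrite inE => l_bad.
have [g_l0|g_l] := eqVneq (colclass g l) set0.
- have [l' g_l'] := mxf_has_class l col_g col_h (esym eq_mxf).
  have h_l : colclass h l != set0 by rewrite -g_l0.
  have l'l : l' != l by apply: (contra_neq _ l_bad) => eq_l; rewrite -g_l' eq_l.
  exists l', l; split; rewrite // ?inE //.
  apply: (contra_neq _ h_l) => h_l'; rewrite -g_l' -h_l'.
  by apply: colclass_disjoint l'l _; rewrite h_l' g_l'.
- have [l' h_l'] := mxf_has_class l col_h col_g eq_mxf.
  have ll' : l != l' by apply: (contra_neq _ l_bad) => eq_l; rewrite -h_l' eq_l.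
  exists l, l'; split; rewrite // ?inE //.
  apply: (contra_neq _ g_l) => g_l'.
  by apply: colclass_disjoint ll' _; rewrite -h_l'.
Qed.

Lemma kempe_equiv_of_mxf (V0 : {set 'I_d}) h g :
  coloring G V0 h -> coloring G V0 g -> mxf G h = mxf G g -> kempe_equiv G h g.
Proof.
move=> + col_g; have [n] := ubnP #|mismatched h g|; elim: n h => // n IH h lt_n col_h eq_mxf.
have [all_match|[l l_bad]] := set_0Vmem (mismatched h g).
  suff -> : h = g by apply: rt_refl.
  apply: colclass_inj => l; apply/eqP/negPn.
  by move/setP: all_match => /(_ l); rewrite !inE => ->.
have [i [j [neq h_j i_bad j_bad]]] := mismatched_swap_pair col_h col_g eq_mxf l_bad.
have hh1 := kempe_equiv_swap_colors Gsym col_h neq.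
apply: rt_trans hh1 (IH _ _ (kempe_equiv_coloring Gsym col_h hh1) _).
- rewrite ltnS in lt_n; apply: leq_trans lt_n.
  exact: proper_card (mismatched_swap_colors neq h_j j_bad i_bad).
- by rewrite mxf_swap_colors.
Qed.

End ColorPermutation.

Section TwoColorings.
Variables (d k : nat) (G : rel 'I_d).
Hypothesis Gsym : ssrbool.symmetric G.
Local Notation coloringT := {ffun 'I_d -> option 'I_k}.
Local Notation coloring2T := {ffun 'I_d -> option 'I_2}.
Implicit Types (h : coloringT) (F : coloring2T) (i j l : 'I_k) (c : 'I_2).

Definition pair_color i j c : 'I_k := if c == ord0 then i else j.

Lemma ord2_cases c : c = ord0 \/ c = ord_max.
Proof. by case: c => [[|[|//]] ?]; [left|right]; apply/val_inj. Qed.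

Lemma pair_color0 i j : pair_color i j ord0 = i.
Proof. by rewrite /pair_color eqxx. Qed.

Lemma pair_color1 i j : pair_color i j ord_max = j.
Proof. by []. Qed.

Lemma pair_color_inj i j : i != j -> injective (pair_color i j).
Proof.
move=> neq c c'; case: (ord2_cases c) => ->; case: (ord2_cases c') => -> //.
  by rewrite pair_color0 pair_color1 => eq_ij; rewrite eq_ij eqxx in neq.
by rewrite pair_color0 pair_color1 => eq_ji; rewrite eq_ji eqxx in neq.
Qed.

Lemma pair_color_bicolor i j c :
  (Some (pair_color i j c) == Some i) || (Some (pair_color i j c) == Some j).
Proof. by case: (ord2_cases c) => ->; rewrite ?pair_color0 ?pair_color1 eqxx ?orbT. Qed.

Lemma pair_color_notin h i j v c :
  v \notin bicolored h i j -> h v != Some (pair_color i j c).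
Proof. by rewrite inE; apply: contra => /eqP ->; apply: pair_color_bicolor. Qed.

Definition restrict2 i j h : coloring2T :=
  [ffun v => [pick c | h v == Some (pair_color i j c)]].

Lemma colclass_restrict2 i j h c :
  i != j -> colclass (restrict2 i j h) c = colclass h (pair_color i j c).
Proof.
move=> neq; apply/setP => v; rewrite !inE ffunE; case: pickP => [c' /eqP -> | none].
  by rewrite !(inj_eq (@Some_inj _)) (inj_eq (pair_color_inj neq)).
by rewrite none.
Qed.

Lemma restrict2_dom i j h v : (restrict2 i j h v != None) = (v \in bicolored h i j).
Proof.
rewrite ffunE inE; case: pickP => [c /eqP -> | none] /=; first by rewrite pair_color_bicolor.
by have := none ord0; have := none ord_max; rewrite pair_color0 pair_color1 => -> ->.
Qed.

Lemma restrict2_coloring (V0 : {set 'I_d}) i j h :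
  i != j -> coloring G V0 h -> coloring G (bicolored h i j) (restrict2 i j h).
Proof.
move=> neq /coloringP[_ proper]; apply/coloringP; split=> [v|u v Guv].
  exact: restrict2_dom.
case Fu: (restrict2 i j h u) => [c|] // _; apply/eqP => Fv.
have : u \in colclass (restrict2 i j h) c by rewrite inE Fu.
have : v \in colclass (restrict2 i j h) c by rewrite inE -Fv.
rewrite !colclass_restrict2 // !inE => /eqP hv /eqP hu.
by move: (proper u v Guv); rewrite hu hv eqxx => /(_ isT).
Qed.

Lemma mxf_coloring2 F : mxf G F = (mxS G (colclass F ord0) + mxS G (colclass F ord_max))%MM.
Proof. by rewrite /mxf big_ord_recl big_ord1. Qed.

Lemma mxf_restrict2 i j h : i != j ->
  mxf G h = (\sum_(l | (l != i) && (l != j)) mxS G (colclass h l) + mxf G (restrict2 i j h))%MM.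
Proof.
move=> neq; rewrite mxf_coloring2 !colclass_restrict2 // pair_color0 pair_color1.
by rewrite /mxf (bigD1 i) // (bigD1 j) 1?eq_sym //= addmA addmC.
Qed.

Definition recolor2 i j F h : coloringT :=
  [ffun v => if F v is Some c then Some (pair_color i j c) else h v].

Section Recolor2.
Variables (i j : 'I_k) (F : coloring2T) (h : coloringT).
Hypotheses (neq : i != j) (colF : coloring G (bicolored h i j) F).

Let domF v : (F v != None) = (v \in bicolored h i j).
Proof. by have /coloringP[] := colF. Qed.

Lemma restrict2_recolor2 : restrict2 i j (recolor2 i j F h) = F.
Proof.
apply: colclass_inj => c; rewrite colclass_restrict2 //; apply/setP => v; rewrite !inE ffunE.
case Fv: (F v) => [c'|]; first by rewrite !(inj_eq (@Some_inj _)) (inj_eq (pair_color_inj neq)).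
by apply/negbTE/pair_color_notin; rewrite -domF Fv.
Qed.

Lemma colclass_recolor2 l : l != i -> l != j -> colclass (recolor2 i j F h) l = colclass h l.
Proof.
move=> li lj; apply/setP => v; rewrite !inE ffunE; case Fv: (F v) => [c|] //.
have other (o : option 'I_k) : (o == Some i) || (o == Some j) -> (o == Some l) = false.
  by case/orP => /eqP ->; rewrite (inj_eq (@Some_inj _)) eq_sym ?(negbTE li) ?(negbTE lj).
have hv : v \in bicolored h i j by rewrite -domF Fv.
by rewrite inE in hv; rewrite !other ?pair_color_bicolor.
Qed.

Lemma bicolored_recolor2 : bicolored (recolor2 i j F h) i j = bicolored h i j.
Proof.
apply/setP => v; rewrite inE ffunE; case Fv: (F v) => [c|]; last by rewrite inE.
by rewrite pair_color_bicolor -domF Fv.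
Qed.

Lemma recolor2_coloring (V0 : {set 'I_d}) :
  coloring G V0 h -> coloring G V0 (recolor2 i j F h).
Proof.
move=> /coloringP[dom proper]; have /coloringP[_ properF] := colF.
apply/coloringP; split=> [v|u v Guv].
  rewrite ffunE -dom; case Fv: (F v) => [c|] //.
  have : v \in bicolored h i j by rewrite -domF Fv.
  by rewrite inE; case: (h v).
rewrite !ffunE; case Fu: (F u) => [cu|]; case Fv: (F v) => [cv|].
- move=> _; rewrite (inj_eq (@Some_inj _)) (inj_eq (pair_color_inj neq)).
  rewrite -(inj_eq (@Some_inj _)) -Fu -Fv.
  by apply: properF Guv _; rewrite Fu.
- by move=> _; rewrite eq_sym; apply: pair_color_notin; rewrite -domF Fv.
- by move=> _; apply: pair_color_notin; rewrite -domF Fu.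
- exact: proper.
Qed.

Lemma kempe_equiv_recolor2 (V0 : {set 'I_d}) :
  coloring G V0 h -> kempe_equiv G h (recolor2 i j F h).
Proof.
move=> col_h; apply: (kempe_equiv_bicolored Gsym col_h (recolor2_coloring col_h) neq).
  by move=> v; rewrite -domF ffunE negbK => /eqP ->.
by move=> v; rewrite bicolored_recolor2.
Qed.

End Recolor2.

End TwoColorings.

Section IdealGen.
Variables (n : nat) (K : fieldType) (P : {mpoly K[n]} -> Prop).
Local Open Scope ring_scope.

Lemma ideal_gen0 : ideal_gen P 0.
Proof. by exists [::]; rewrite big_nil. Qed.

Lemma ideal_genD p q : ideal_gen P p -> ideal_gen P q -> ideal_gen P (p + q).
Proof.
move=> [s [Ps ->]] [t [Pt ->]]; exists (s ++ t); rewrite big_cat; split=> // r.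
by rewrite mem_cat => /orP[/Ps|/Pt].
Qed.

Lemma ideal_gen_mul c q : P q -> ideal_gen P (c * q).
Proof.
by move=> Pq; exists [:: (c, q)]; rewrite big_seq1; split=> // r; rewrite inE => /eqP ->.
Qed.

End IdealGen.

Section KempeToIdeal.
Variables (K : fieldType) (d k : nat) (G : rel 'I_d).
Hypothesis Gsym : ssrbool.symmetric G.
Local Notation coloringT := {ffun 'I_d -> option 'I_k}.
Local Open Scope ring_scope.

Lemma KG0 : KG K G 0.
Proof. by exists 0, 0; rewrite addr0; split; [apply: ideal_gen0 | split; [apply: ideal_gen0|]]. Qed.

Lemma KGD p q : KG K G p -> KG K G q -> KG K G (p + q).
Proof.
move=> [a [b [Ja [Mb ->]]]] [a' [b' [Ja' [Mb' ->]]]]; exists (a + a'), (b + b').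
by rewrite addrACA; split; [apply: ideal_genD | split; [apply: ideal_genD|]].
Qed.

Lemma KG_JG p : JG K G p -> KG K G p.
Proof. by exists p, 0; rewrite addr0; split=> //; split; [apply: ideal_gen0|]. Qed.

(* The two colour classes i, j form a 2-colouring of the subgraph they induce;
   all other classes give a common monomial factor. *)
Lemma JG_two_color_change (V0 : {set 'I_d}) (h h' : coloringT) i j :
  coloring G V0 h -> coloring G V0 h' -> i != j -> bicolored h' i j = bicolored h i j ->
  (forall l, l != i -> l != j -> colclass h' l = colclass h l) ->
  JG K G (xf K G h - xf K G h').
Proof.
move=> col_h col_h' neq W' cl'.
rewrite (xf_mxf K col_h) (xf_mxf K col_h') (mxf_restrict2 G h neq) (mxf_restrict2 G h' neq).
have -> : (\sum_(l | (l != i) && (l != j)) mxS G (colclass h' l) =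
            \sum_(l | (l != i) && (l != j)) mxS G (colclass h l))%MM.
  by apply: eq_bigr => l /andP[li lj]; rewrite cl'.
rewrite !mpolyXD -mulrBr.
rewrite -(xf_mxf K (restrict2_coloring neq col_h)) -(xf_mxf K (restrict2_coloring neq col_h')).
apply: ideal_gen_mul; exists (bicolored h i j), (restrict2 i j h), (restrict2 i j h').
split; first exact: restrict2_coloring neq col_h.
by rewrite -W'; split=> //; apply: restrict2_coloring neq col_h'.
Qed.

Lemma JG_kempe_step (V0 : {set 'I_d}) (h h' : coloringT) :
  coloring G V0 h -> kempe_step G h h' -> JG K G (xf K G h - xf K G h').
Proof.
move=> col_h /kempe_stepP[i [j [x [ij xW ->]]]].
apply: (JG_two_color_change (i := i) (j := j) col_h (kempe_switch_coloring Gsym xW col_h)).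
- by apply: contraTneq ij => ->; rewrite ltnn.
- exact: bicolored_kempe_switch.
- by move=> l; apply: colclass_kempe_switch _ xW.
Qed.

Lemma KG_kempe_equiv (V0 : {set 'I_d}) (h h' : coloringT) :
  coloring G V0 h -> kempe_equiv G h h' -> KG K G (xf K G h - xf K G h').
Proof.
move=> + hh'; elim: hh' => [h1 h2 step col|h1 _|h1 h2 h3 h12 IH12 _ IH23 col].
- exact/KG_JG/(JG_kempe_step col step).
- by rewrite subrr; apply: KG0.
- rewrite -(subrKA (xf K G h2)); apply: KGD; first exact: IH12.
  exact/IH23/(kempe_equiv_coloring Gsym col h12).
Qed.

End KempeToIdeal.

Section IdealToKempe.
Variables (K : fieldType) (d k : nat) (G : rel 'I_d).
Hypothesis Gsym : ssrbool.symmetric G.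
Local Notation n := (nvars G).
Local Notation coloringT := {ffun 'I_d -> option 'I_k}.
Local Notation coloring2T := {ffun 'I_d -> option 'I_2}.

(* The two classes of F occur among the classes of h, say as colours i and j;
   recolouring them by F' is a sequence of Kempe switchings. *)
Lemma kempe_equiv_exchange (V0 W : {set 'I_d}) (h : coloringT) (F F' : coloring2T) mu :
  coloring G V0 h -> coloring G W F -> coloring G W F' -> mxf G h = (mu + mxf G F)%MM ->
  exists2 h', kempe_equiv G h h' & mxf G h' = (mu + mxf G F')%MM.
Proof.
move=> col_h colF colF' eq_h.
have eq_h2 : mxf G h = (mu + mxS G (colclass F ord0) + mxS G (colclass F ord_max))%MM.
  by rewrite eq_h mxf_coloring2 addmA.
have [i [j [neq h_i h_j]]] :=
  mxf_two_classes col_h (colclass_stable ord0 colF) (colclass_stable ord_max colF) eq_h2.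
have F_h : restrict2 i j h = F.
  apply: colclass_inj => c; rewrite colclass_restrict2 //.
  by case: (ord2_cases c) => ->; rewrite ?pair_color0 ?pair_color1.
have colF'_h : coloring G (bicolored h i j) F'.
  suff -> : bicolored h i j = W by [].
  have /coloringP[domF _] := colF.
  by apply/setP => v; rewrite -domF -F_h restrict2_dom.
exists (recolor2 i j F' h); first exact: kempe_equiv_recolor2 col_h.
rewrite (mxf_restrict2 G _ neq) (restrict2_recolor2 neq colF'_h).
have := mxf_restrict2 G h neq; rewrite F_h eq_h => /addIm ->; congr (_ + _)%MM.
by apply: eq_bigr => l /andP[li lj]; rewrite (colclass_recolor2 colF'_h).
Qed.

Lemma mxf_disjoint_classes (V0 : {set 'I_d}) (h : coloringT) mu S T :
  coloring G V0 h -> stableb G S -> stableb G T -> S :&: T != set0 ->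
  mxf G h != (mu + mxS G S + mxS G T)%MM.
Proof.
move=> col_h stS stT /set0Pn[v]; apply: contraL => /eqP eq_h.
have [l1 [l2 [neq <- <-]]] := mxf_two_classes col_h stS stT eq_h.
apply/negP; rewrite !inE => /andP[/eqP -> /eqP/Some_inj eq_l].
by rewrite eq_l eqxx in neq.
Qed.

Local Open Scope ring_scope.

Lemma sum_mcoeffX (s : seq 'X_{1..n}) m :
  uniq s -> \sum_(m' <- s) ('X_[m] : {mpoly K[n]})@_m' = (m \in s)%:R.
Proof.
elim: s => [|m' s IH] /=; first by rewrite big_nil.
case/andP => m's us; rewrite big_cons IH // in_cons mcoeffX.
by case: (eqVneq m m') => [->|_]; rewrite ?(negbTE m's) ?addr0 ?add0r.
Qed.

Section KempeFunctional.
Variables (V0 : {set 'I_d}) (f : coloringT).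
Hypothesis col_f : coloring G V0 f.

Definition kempe_reachable (h : coloringT) : bool :=
  if excluded_middle_informative (kempe_equiv G f h) then true else false.

Lemma kempe_reachableP h : reflect (kempe_equiv G f h) (kempe_reachable h).
Proof. by rewrite /kempe_reachable; case: excluded_middle_informative => ?; constructor. Qed.

Definition kempe_monomials : seq 'X_{1..n} := undup [seq mxf G h | h in kempe_reachable].

Lemma kempe_monomialsP m :
  reflect (exists2 h, kempe_equiv G f h & m = mxf G h) (m \in kempe_monomials).
Proof.
rewrite mem_undup; apply: (iffP imageP) => [[h /kempe_reachableP fh ->]|[h fh ->]].
  by exists h.
by exists h => //; apply/kempe_reachableP.
Qed.

Definition kempe_form (p : {mpoly K[n]}) : K := \sum_(m <- kempe_monomials) p@_m.

Lemma kempe_formD p q : kempe_form (p + q) = kempe_form p + kempe_form q.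
Proof. by rewrite /kempe_form -big_split; apply: eq_bigr => m _; rewrite mcoeffD. Qed.

Lemma kempe_formB p q : kempe_form (p - q) = kempe_form p - kempe_form q.
Proof. by rewrite /kempe_form -sumrB; apply: eq_bigr => m _; rewrite mcoeffB. Qed.

Lemma kempe_form_sum (I : Type) (r : seq I) (F : I -> {mpoly K[n]}) :
  kempe_form (\sum_(i <- r) F i) = \sum_(i <- r) kempe_form (F i).
Proof. by rewrite /kempe_form exchange_big; apply: eq_bigr => m _; rewrite raddf_sum. Qed.

Lemma kempe_formZ c p : kempe_form (c *: p) = c * kempe_form p.
Proof. by rewrite /kempe_form mulr_sumr; apply: eq_bigr => m _; rewrite mcoeffZ. Qed.

Lemma kempe_formX m : kempe_form 'X_[m] = (m \in kempe_monomials)%:R.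
Proof. exact/sum_mcoeffX/undup_uniq. Qed.

Lemma kempe_form_ideal (P : {mpoly K[n]} -> Prop) p :
  (forall q m, P q -> kempe_form ('X_[m] * q) = 0) -> ideal_gen P p -> kempe_form p = 0.
Proof.
move=> vanish [s [Ps ->]]; rewrite kempe_form_sum big_seq big1 // => q /Ps Pq.
rewrite (mpolyE q.1) mulr_suml kempe_form_sum big1 // => m _.
by rewrite -scalerAl kempe_formZ vanish ?mulr0.
Qed.

Lemma kempe_form_JG p : JG K G p -> kempe_form p = 0.
Proof.
apply: kempe_form_ideal => _ m [W [F [F' [colF [colF' ->]]]]].
have exchange (F1 F2 : coloring2T) : coloring G W F1 -> coloring G W F2 ->
    (m + mxf G F1)%MM \in kempe_monomials -> (m + mxf G F2)%MM \in kempe_monomials.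
  move=> colF1 colF2 /kempe_monomialsP[h fh eq_h].
  have col_h := kempe_equiv_coloring Gsym col_f fh.
  have [h' hh' eq_h'] := kempe_equiv_exchange col_h colF1 colF2 (esym eq_h).
  by apply/kempe_monomialsP; exists h' => //; apply: rt_trans fh hh'.
rewrite mulrBr kempe_formB (xf_mxf K colF) (xf_mxf K colF') -!mpolyXD !kempe_formX.
have -> : ((m + mxf G F)%MM \in kempe_monomials) = ((m + mxf G F')%MM \in kempe_monomials).
  by apply/idP/idP; apply: exchange.
by rewrite subrr.
Qed.

Lemma kempe_form_MG p : MG K G p -> kempe_form p = 0.
Proof.
apply: kempe_form_ideal => _ m [S [T [stS [stT [ST ->]]]]].
rewrite (xS_mxS K stS) (xS_mxS K stT) mulrA -!mpolyXD kempe_formX.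
case: kempe_monomialsP => // [[h fh eq_h]].
have col_h := kempe_equiv_coloring Gsym col_f fh.
by move: (mxf_disjoint_classes m col_h stS stT ST); rewrite -eq_h eqxx.
Qed.

Lemma kempe_form_KG p : KG K G p -> kempe_form p = 0.
Proof.
by case=> a [b [Ja [Mb ->]]]; rewrite kempe_formD kempe_form_JG // kempe_form_MG // addr0.
Qed.

Lemma kempe_equiv_of_KG (g : coloringT) :
  coloring G V0 g -> KG K G (xf K G f - xf K G g) -> kempe_equiv G f g.
Proof.
move=> col_g /kempe_form_KG; rewrite kempe_formB (xf_mxf K col_f) (xf_mxf K col_g) !kempe_formX.
have -> : mxf G f \in kempe_monomials by apply/kempe_monomialsP; exists f => //; apply: rt_refl.
case: kempe_monomialsP => [[h fh eq_g] _|_]; last by rewrite subr0 => /eqP; rewrite oner_eq0.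
exact: rt_trans fh (kempe_equiv_of_mxf Gsym (kempe_equiv_coloring Gsym col_f fh) col_g (esym eq_g)).
Qed.

End KempeFunctional.
End IdealToKempe.

Unset Implicit Arguments.
Set Strict Implicit.
Local Open Scope ring_scope.

Theorem proposition6p5 (K : fieldType) (d : nat) (G : rel 'I_d)
  (Gsym : ssrbool.symmetric G) (Girr : irreflexive G) (k : nat) (hk : (0 < k)%N)
  (V0 : {set 'I_d}) (f g : {ffun 'I_d -> option 'I_k}) :
  coloring G V0 f -> coloring G V0 g ->
  (kempe_equiv G f g <-> KG K G (xf K G f - xf K G g)).
Proof.
move=> col_f col_g; split.
  exact: (KG_kempe_equiv K Gsym col_f).
exact: (kempe_equiv_of_KG Gsym col_f col_g).
Qed.
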